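(* Let $r \ge 2$ be an integer. There is a constant $c = c(r) > 0$, depending only on $r$, such that for all integers $n \ge r$, \[\overrightarrow{\Gamma}_{r-1}(H(n,r)) \ge c\,(\ln n)^{\frac{1}{r-1}}.\]
   Context: $H(n,r)$ denotes the complete $r$-uniform hypergraph on $n$ vertices (every $r$-subset of the $n$-element vertex set is an edge). An orientation $D$ of an $r$-uniform hypergraph $H=(V,\mathcal{E})$ assigns to each edge $E\in\mathcal{E}$ exactly one of the $r!$ linear orderings of its elements. For $1\le p\le r-1$, a set $S\subseteq V$ is a directed $p$-dominating set of $D$ if for every vertex $u\in V\setminus S$ there is an edge $E\in\mathcal{E}$ with $u\in E$ whose first $p$ vertices (in the ordering given by $D$) all lie in $S$. $\overrightarrow{\gamma}_p(D)$ is the minimum cardinality of a directed $p$-dominating set of $D$, and $\overrightarrow{\Gamma}_p(H)$ is the maximum of $\overrightarrow{\gamma}_p(D)$ over all orientations $D$ of $H$. $\ln$ is the natural logarithm. *)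

From mathcomp Require Import all_boot.
Set Implicit Arguments. Unset Strict Implicit. Unset Printing Implicit Defensive.

(* Vertex set of H(n,r) is 'I_n; edges are the sets E : {set 'I_n} with #|E| = r.
   An orientation is represented by a finite function assigning to every set E
   an r-tuple; it is an orientation of H(n,r) when, for every edge E, the tuple
   is a linear ordering of E (a duplicate-free enumeration of E).  Values on
   non-edges are irrelevant. *)
Definition orientation_of (n r : nat) := {ffun {set 'I_n} -> r.-tuple 'I_n}.

Definition is_orientation (n r : nat) (D : orientation_of n r) : bool :=
  [forall E : {set 'I_n}, (#|E| == r) ==> perm_eq (D E) (enum E)].

Definition dominating (n r p : nat) (D : orientation_of n r) (S : {set 'I_n}) : bool :=
  [forall u : 'I_n, (u \notin S) ==>
     [exists E : {set 'I_n}, [&& #|E| == r, u \in E & all (fun v => v \in S) (take p (D E))]]].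

(* gamma_p(D): minimum size of a directed p-dominating set (the whole vertex set,
   of size n, is always dominating, so the default value n is harmless). *)
Definition gamma (n r p : nat) (D : orientation_of n r) : nat :=
  \big[minn/#|'I_n|]_(S : {set 'I_n} | dominating p D S) #|S|.

Definition Gamma (n r p : nat) : nat :=
  \max_(D : orientation_of n r | is_orientation D) gamma p D.

(* We prove the stronger bound Gamma_(r-1)(H(n, r)) > log_32 n, through tournaments.
   1. A tournament b on the vertex set induces an orientation of H(n, r): order every
      edge so that its last vertex is beaten (in b) by another vertex of the edge.
      If S is a directed (r-1)-dominating set of this orientation, a vertex u outside
      S lies in an edge whose first r-1 vertices are in S; so u is the last vertex and
      is beaten by a member of S, i.e. S dominates b.  Hence Gamma_(r-1)(H(n, r))
      exceeds every k below the sizes of all dominating sets of b.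
   2. Erdos's counting argument: tournaments are encoded by tables of coins, a fixed
      k-set dominates the tournament for a fraction (1 - 2^-k)^(n-k) of the tables, so
      a union bound over the 'C(n, k) sets of size k gives a tournament without
      dominating sets of size <= k as soon as 'C(n, k) (1 - 2^-k)^(n-k) < 1.
   3. Elementary estimates show this for k = trunc_log 32 n, whence Gamma > ln n / ln 32
      - 1 and Gamma >= max(1, ln n) / ln 32 >= (ln n)^(1/(r-1)) / ln 32.
   The finite combinatorics is developed with MathComp inside the module
   TournamentBound, so that MathComp's notations on nat do not reach the statement of
   the main theorem, which comes last. *)

From Stdlib Require Import Reals Lra Lia.
From mathcomp Require all_boot zify.

Module TournamentBound.
Import all_boot zify.
Set Implicit Arguments. Unset Strict Implicit. Unset Printing Implicit Defensive.

Lemma card_ffun_pointwise (I J : finType) (P : I -> pred J) :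
  #|[set h : {ffun I -> J} | [forall i, P i (h i)]]| = \prod_i #|P i|.
Proof.
rewrite cardsE (eq_card (B := (family P : simpl_pred {ffun I -> J}))); last first.
  by move=> h; rewrite !inE.
by rewrite card_family -[RHS]big_enum /= [in RHS]unlock /reducebig foldr_map.
Qed.

Lemma prod_by_membership (T : finType) (S : {set T}) (a b : nat) :
  \prod_(x : T) (if x \in S then a else b) = a ^ #|S| * b ^ #|~: S|.
Proof.
rewrite (bigID (mem S)) /= -!prod_nat_const.
congr (_ * _); apply: eq_big => [x | x].
- by [].
- by move=> ->.
- by rewrite inE.
- by move=> /negbTE ->.
Qed.

Lemma card_bigcup_le (I T : finType) (P : pred I) (E : I -> {set T}) :
  #|\bigcup_(i | P i) E i| <= \sum_(i | P i) #|E i|.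
Proof.
apply: (big_ind2 (fun (A : {set T}) m => #|A| <= m)) => //; first by rewrite cards0.
by move=> A a B b leA leB; apply: leq_trans (leq_card_setU A B) (leq_add leA leB).
Qed.

Lemma superset_of_card (T : finType) (k : nat) (S : {set T}) :
  #|S| <= k -> k <= #|T| -> exists2 S' : {set T}, S \subset S' & #|S'| = k.
Proof.
elim: k => [|k IH] leSk leKT; first by exists S => //; apply/eqP; rewrite -leqn0.
have [eqSk | neSk] := eqVneq #|S| k.+1; first by exists S.
have leSk' : #|S| <= k by rewrite -ltnS ltn_neqAle neSk leSk.
have [S' subSS' cardS'] := IH leSk' (ltnW leKT).
have /set0Pn [x] : ~: S' != set0 by rewrite -card_gt0; have := cardsC S'; lia.
rewrite inE => xS'.
exists (x |: S'); first exact: subset_trans subSS' (subsetUr _ _).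
by rewrite cardsU1 xS' cardS'.
Qed.

Lemma card_rows_avoiding (T : finType) (S : {set T}) :
  #|[set row : {ffun T -> bool} | [forall s, (s \in S) ==> ~~ row s]]| = 2 ^ #|~: S|.
Proof.
rewrite (card_ffun_pointwise (fun s b => (s \in S) ==> ~~ b)).
transitivity (1 ^ #|S| * 2 ^ #|~: S|); last by rewrite exp1n mul1n.
rewrite -prod_by_membership; apply: eq_bigr => s _; case: (s \in S).
- by apply: (@eq_card1 _ false) => b; rewrite !inE; case: b.
- by rewrite -[2]card_bool; apply: eq_card.
Qed.

Lemma card_rows_hitting (T : finType) (S : {set T}) :
  #|[set row : {ffun T -> bool} | [exists s in S, row s]]| = 2 ^ #|T| - 2 ^ #|~: S|.
Proof.
set A := [set row : {ffun T -> bool} | [forall s, (s \in S) ==> ~~ row s]].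
have <- : #|A| + #|~: A| = 2 ^ #|T| by rewrite cardsC card_ffun card_bool.
rewrite -(card_rows_avoiding S) addKn; apply: eq_card => row.
by rewrite !inE negb_forall; apply: eq_existsb => s; rewrite negb_imply negbK.
Qed.

Definition rel_dominating (T : finType) (b : rel T) (S : {set T}) : bool :=
  [forall u, (u \notin S) ==> [exists s in S, b s u]].

Lemma rel_dominating_superset (T : finType) (b : rel T) (S S' : {set T}) :
  S \subset S' -> rel_dominating b S -> rel_dominating b S'.
Proof.
move=> subSS' /forallP domS; apply/forallP => u; apply/implyP => uS'.
have /existsP [s /andP [sS bsu]] := implyP (domS u) (contra (subsetP subSS' u) uS').
by apply/existsP; exists s; rewrite (subsetP subSS').
Qed.

Section RandomTournament.
Variable n : nat.

Local Notation coins := {ffun 'I_n -> {ffun 'I_n -> bool}}.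

Definition beats (g : coins) (s u : 'I_n) : bool :=
  (s != u) && ((s < u) == (g u s (+) g s u)).

Lemma beats_total (g : coins) (u v : 'I_n) : u != v -> beats g u v || beats g v u.
Proof.
move=> neuv; rewrite /beats neuv (eq_sym v) neuv /= [g v u (+) _]addbC.
by case: ltngtP neuv => [| | /val_inj ->]; rewrite ?eqxx //; case: (_ (+) _).
Qed.

Definition dominated (g : coins) (S : {set 'I_n}) : bool :=
  rel_dominating (beats g) S.

(* Flipping the coins g u s (u outside S, s in S) by the parity of g s u and
   the label order turns "s beats u" into "g u s is set".  Since the coins of
   the rows of S are untouched, this is an involution of the coin tables. *)
Definition flip (S : {set 'I_n}) (g : coins) : coins :=
  [ffun u => [ffun s => if (u \notin S) && (s \in S)
     then g u s (+) g s u (+) ~~ (s < u) else g u s]].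

Lemma flipK (S : {set 'I_n}) : involutive (flip S).
Proof.
move=> g; apply/ffunP => u; apply/ffunP => s; rewrite !ffunE.
case: (boolP (u \in S)) => uS; case: (boolP (s \in S)) => sS //=.
by case: (g u s); case: (g s u); case: (s < u).
Qed.

Lemma dominated_flip (S : {set 'I_n}) (g : coins) :
  dominated g S = [forall u, (u \in S) || [exists s in S, flip S g u s]].
Proof.
apply: eq_forallb => u; rewrite -implyNb; case: (boolP (u \in S)) => //= uS.
apply: eq_existsb => s; case: (boolP (s \in S)) => //= sS.
have nesu : s != u by apply: contraNneq uS => <-.
rewrite !ffunE uS sS /beats nesu /=.
by case: (g u s); case: (g s u); case: (s < u).
Qed.

Lemma card_dominated (S : {set 'I_n}) :
  #|[set g | dominated g S]| = (2 ^ n) ^ #|S| * (2 ^ n - 2 ^ #|~: S|) ^ #|~: S|.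
Proof.
have -> : [set g | dominated g S] =
    flip S @^-1: [set h : coins | [forall u, (u \in S) || [exists s in S, h u s]]].
  by apply/setP => g; rewrite !inE dominated_flip.
rewrite card_preimset; last exact: can_inj (flipK S).
rewrite (card_ffun_pointwise (fun u (row : {ffun 'I_n -> bool}) =>
  (u \in S) || [exists s in S, row s])) -prod_by_membership.
apply: eq_bigr => u _; case: (u \in S).
- transitivity #|{ffun 'I_n -> bool}|; first exact: eq_card.
  by rewrite card_ffun card_bool card_ord.
- by rewrite -[n in 2 ^ n - _]card_ord -card_rows_hitting; apply: eq_card => row; rewrite inE.
Qed.

(* A k-set S dominates a fraction (1 - 2^-k)^(n-k) of all coin tables. *)
Lemma card_dominated_scaled (S : {set 'I_n}) (k : nat) : #|S| = k ->
  #|[set g | dominated g S]| * (2 ^ k) ^ (n - k) = (2 ^ n) ^ n * (2 ^ k - 1) ^ (n - k).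
Proof.
move=> cardS; have cardCS : #|~: S| = n - k by rewrite cardsCs setCK card_ord cardS.
have le_kn : k <= n by rewrite -cardS (leq_trans (max_card _)) ?card_ord.
rewrite card_dominated cardS cardCS; set m := n - k.
have -> : n = k + m by rewrite subnKC.
rewrite expnD; set A := 2 ^ k; set B := 2 ^ m.
have -> : A * B - B = (A - 1) * B by rewrite mulnBl mul1n.
rewrite expnD !expnMn.
set Ak := A ^ k; set Bk := B ^ k; set Am := A ^ m; set Bm := B ^ m; set C := (A - 1) ^ m.
lia.
Qed.

Lemma card_coins : #|{: coins}| = (2 ^ n) ^ n.
Proof. by rewrite card_ffun card_ffun card_bool card_ord. Qed.

Lemma exists_tournament_without_small_dominating (k : nat) : k <= n ->
  'C(n, k) * (2 ^ k - 1) ^ (n - k) < (2 ^ k) ^ (n - k) ->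
  exists g : coins, forall S, dominated g S -> k < #|S|.
Proof.
move=> le_kn few.
pose bad := \bigcup_(S : {set 'I_n} | #|S| == k) [set g | dominated g S].
have card_bad : #|bad| < #|{: coins}|.
  have scale_pos : 0 < (2 ^ k) ^ (n - k) by rewrite !expn_gt0.
  rewrite -(ltn_pmul2r scale_pos); apply: leq_ltn_trans (_ : _ <=
    \sum_(S : {set 'I_n} | #|S| == k) #|[set g | dominated g S]| * (2 ^ k) ^ (n - k)) _.
    by rewrite -big_distrl leq_mul2r card_bigcup_le orbT.
  rewrite (eq_bigr (fun _ => (2 ^ n) ^ n * (2 ^ k - 1) ^ (n - k))); last first.
    by move=> S /eqP; apply: card_dominated_scaled.
  rewrite sum_nat_const -cardsE card_draws card_ord card_coins mulnCA ltn_pmul2l //.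
  by rewrite !expn_gt0.
have /set0Pn [g] : ~: bad != set0 by rewrite -card_gt0 cardsCs setCK subn_gt0.
rewrite inE => g_good; exists g => S domS; rewrite ltnNge; apply/negP => le_Sk.
have le_kI : k <= #|'I_n| by rewrite card_ord.
have [S' subSS' cardS'] := superset_of_card le_Sk le_kI.
apply: (negP g_good); apply/bigcupP; exists S'; first by rewrite cardS'.
by rewrite inE; apply: rel_dominating_superset domS.
Qed.

End RandomTournament.

Lemma leq_pow_base (m p e : nat) : m <= p -> m ^ e <= p ^ e.
Proof. by case: e => // e; rewrite leq_exp2r. Qed.

Lemma bernoulli (a N : nat) : a ^ N + N * a ^ N.-1 <= a.+1 ^ N.
Proof.
elim: N => [|N IH] //; rewrite [a.+1 ^ _]expnS.
apply: leq_trans (leq_mul (leqnn a.+1) IH); case: N {IH} => [|N] /=.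
- by rewrite !expn0; lia.
- rewrite !expnS; set x := a ^ N; nia.
Qed.

(* (1 - 1/N)^N <= 1/2, stated for N = a + 1 without fractions. *)
Lemma halving_power (a : nat) : 2 * a ^ a.+1 <= a.+1 ^ a.+1.
Proof.
apply: leq_trans (bernoulli a a.+1).
by rewrite /= expnS mul2n -addnn leq_add2l leq_mul2r leqnSn orbT.
Qed.

(* 'C(n, t) = n^_t / t! <= n^t. *)
Lemma binomial_le_pow (n t : nat) : 'C(n, t) <= n ^ t.
Proof.
apply: leq_trans (_ : 'C(n, t) <= 'C(n, t) * t`!) _; first by rewrite leq_pmulr ?fact_gt0.
rewrite bin_ffact ffact_prod -[t in n ^ t]card_ord -prod_nat_const.
by apply: leq_prod => i _; rewrite leq_subr.
Qed.

(* 16^t outgrows the exponent j = 5 t (t+1) of the binomial bound below. *)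
Lemma quadratic_le_pow16 (t : nat) : 5 * t * t.+1 + 1 <= 2 ^ (4 * t).
Proof.
elim: t => [|t IH] //; rewrite [4 * _]mulnS expnD (_ : 2 ^ 4 = 16) //.
set X := 2 ^ (4 * t); nia.
Qed.

(* With t = trunc_log 32 n, the union bound over t-sets of vertices is below 1:
   'C(n, t) <= 2^j for j = 5 t (t+1), while (1 - 2^-t)^(n-t) <= 2^-j because
   n - t exceeds j 2^t. *)
Lemma union_bound_lt_one (n t : nat) : 32 ^ t <= n < 32 ^ t.+1 ->
  'C(n, t) * (2 ^ t - 1) ^ (n - t) < (2 ^ t) ^ (n - t).
Proof.
case/andP => lo hi.
set N := 2 ^ t; set a := N - 1; set j := 5 * t * t.+1; set m := n - t.
have N_pos : 0 < N by rewrite expn_gt0.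
have Na : N = a.+1 by rewrite /a subn1 prednK.
have pow32 : 32 ^ t = 2 ^ (4 * t) * N by rewrite (_ : 32 = 2 ^ 5) // -expnM mulSnr expnD.
have binC : 'C(n, t) <= 2 ^ j.
  apply: leq_trans (binomial_le_pow n t) _.
  have -> : 2 ^ j = (32 ^ t.+1) ^ t.
    by rewrite (_ : 32 = 2 ^ 5) // -!expnM; congr (_ ^ _); rewrite /j; lia.
  exact/leq_pow_base/ltnW.
have jN_lt_m : j * N < m.
  have := leq_mul (quadratic_le_pow16 t) (leqnn N); have := ltn_expl t (isT : 1 < 2).
  rewrite -/N -/j; move: lo; rewrite pow32 /m; set X := 2 ^ (4 * t); nia.
have halving : 2 ^ j * a ^ (j * N) <= N ^ (j * N).
  rewrite [j * N]mulnC [a ^ _]expnM [N ^ _]expnM -expnMn; apply: leq_pow_base.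
  by have := halving_power a; rewrite -Na.
have -> : a ^ m = a ^ (j * N) * a ^ (m - j * N) by rewrite -expnD subnKC // ltnW.
have -> : N ^ m = N ^ (j * N) * N ^ (m - j * N) by rewrite -expnD subnKC // ltnW.
rewrite mulnA; apply: leq_ltn_trans (leq_mul (leq_mul binC (leqnn _)) (leqnn _)) _.
apply: leq_ltn_trans (leq_mul halving (leqnn _)) _.
rewrite ltn_pmul2l ?expn_gt0 ?N_pos // ltn_exp2r ?subn_gt0 //.
by rewrite Na.
Qed.

Section OrientationOfTournament.
Variables (n r : nat) (x0 : 'I_n) (b : rel 'I_n).
Hypothesis b_total : forall u v, u != v -> b u v || b v u.
Hypothesis two_le_r : 1 < r.

(* A vertex of E that is beaten by another vertex of E (x0 if there is none). *)
Definition loser (E : {set 'I_n}) : 'I_n :=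
  odflt x0 [pick v in E | [exists s in E, (s != v) && b s v]].

(* Any two distinct vertices of E compare, so E has a loser when #|E| >= 2. *)
Lemma loserP (E : {set 'I_n}) : 1 < #|E| ->
  loser E \in E /\ exists2 s, s \in E & (s != loser E) && b s (loser E).
Proof.
case/card_gt1P => u [v [uE vE neuv]]; rewrite /loser.
case: pickP => [w /andP [wE /existsP [s /andP [sE bsw]]] | no_loser] /=.
  by split=> //; exists s.
have beaten w s : w \in E -> s \in E -> s != w -> b s w -> False.
  by move=> wE sE nesw bsw; have := no_loser w; rewrite wE /=; case/existsP; exists s; rewrite sE nesw.
exfalso; case/orP: (b_total neuv) => [buv | bvu].
- exact: beaten v u vE uE neuv buv.
- by apply: (beaten u v uE vE _ bvu); rewrite eq_sym.
Qed.

Let edge_gt1 (E : {set 'I_n}) : #|E| = r -> 1 < #|E|.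
Proof. by move=> ->. Qed.

Definition loser_last : orientation_of n r :=
  [ffun E => insubd (nseq_tuple r x0) (rcons (rem (loser E) (enum E)) (loser E))].

Lemma loser_last_val (E : {set 'I_n}) : #|E| = r ->
  val (loser_last E) = rcons (rem (loser E) (enum E)) (loser E).
Proof.
move=> card_E; have [loserE _] := loserP (edge_gt1 card_E).
rewrite ffunE val_insubd size_rcons size_rem ?mem_enum // -cardE card_E.
by rewrite prednK ?eqxx // ltnW.
Qed.

Lemma loser_last_is_orientation : is_orientation loser_last.
Proof.
apply/forallP => E; apply/implyP => /eqP card_E.
have [loserE _] := loserP (edge_gt1 card_E).
by rewrite loser_last_val // perm_rcons perm_sym perm_to_rem // mem_enum.
Qed.

(* The first r - 1 vertices of an edge exclude its loser, so a vertex dominated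
   through an edge is that edge's loser, and is beaten by a member of S. *)
Lemma loser_last_dominating (S : {set 'I_n}) :
  dominating (r - 1) loser_last S -> rel_dominating b S.
Proof.
move=> /forallP domS; apply/forallP => u; apply/implyP => uS.
have /existsP [E /and3P [/eqP card_E uE head_in_S]] := implyP (domS u) uS.
have [loserE [s sE /andP [nes bs]]] := loserP (edge_gt1 card_E).
have size_rem : size (rem (loser E) (enum E)) = r - 1.
  by rewrite size_rem ?mem_enum // -cardE card_E subn1.
move: head_in_S; rewrite loser_last_val // -cats1 -size_rem take_size_cat // => /allP in_S.
have others_in_S x : x \in E -> x != loser E -> x \in S.
  by move=> xE nex; apply: in_S; rewrite (mem_rem_uniq _ (enum_uniq _)) inE nex mem_enum.
have -> : u = loser E by apply/eqP; apply: contraNT uS => /(others_in_S _ uE).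
by apply/existsP; exists s; rewrite others_in_S.
Qed.

Lemma Gamma_gt_tournament (k : nat) :
  (forall S, rel_dominating b S -> k < #|S|) -> k < Gamma n r (r - 1).
Proof.
move=> dom_big; apply: leq_trans (_ : gamma (r - 1) loser_last <= _).
  apply: (big_ind (fun x => k < x)).
  - by rewrite -cardsT; apply: dom_big; apply/forallP => u; rewrite inE.
  - by move=> x y kx ky; rewrite leq_min kx ky.
  - by move=> S /loser_last_dominating; apply: dom_big.
apply: (leq_bigmax_cond (P := fun D => is_orientation D) (F := fun D => gamma (r - 1) D)).
exact: loser_last_is_orientation.
Qed.

End OrientationOfTournament.

Lemma Gamma_gt_trunc_log (n r : nat) : 1 < r -> r <= n ->
  trunc_log 32 n < Gamma n r (r - 1).
Proof.
move=> two_le_r le_rn; have n_pos : 0 < n by apply: leq_trans le_rn; apply: ltnW.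
have bounds := trunc_log_bounds (isT : 1 < 32) n_pos; set t := trunc_log 32 n in bounds *.
have le_tn : t <= n by case/andP: bounds => lo _; apply: leq_trans lo; apply/ltnW/ltn_expl.
have [g g_big] := exists_tournament_without_small_dominating le_tn (union_bound_lt_one bounds).
exact: (Gamma_gt_tournament (Ordinal n_pos) (beats_total g) two_le_r g_big).
Qed.

Local Open Scope R_scope.

Lemma INR_expn (m k : nat) : INR (m ^ k)%N = INR m ^ k.
Proof. by elim: k => [|k IH] //=; rewrite expnS mult_INR IH. Qed.

(* ln 32 > 1 = ln e, since e < 3. *)
Lemma one_lt_ln32 : 1 < ln 32.
Proof.
rewrite -[X in X < _]ln_exp; apply: ln_increasing; first exact: exp_pos.
by have := exp_le_3; lra.
Qed.

Lemma inv_ln32_pos : 0 < / ln 32.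
Proof. by apply: Rinv_0_lt_compat; have := one_lt_ln32; lra. Qed.

Lemma ln_INR_pos (n : nat) : (2 <= n)%coq_nat -> 0 < ln (INR n).
Proof.
move=> /le_INR two_le_n; rewrite -ln_1; apply: ln_increasing; first lra.
by move: two_le_n; rewrite INR_IZR_INZ /=; lra.
Qed.

Lemma inv_INR_pred_bounds (r : nat) : (2 <= r)%coq_nat -> 0 < 1 / INR (r - 1) <= 1.
Proof.
move=> two_le_r; have one_le : 1 <= INR (r - 1) by apply: (le_INR 1); lia.
split; first by apply: Rdiv_lt_0_compat; lra.
by rewrite /Rdiv Rmult_1_l -Rinv_1; apply: Rinv_le_contravar; lra.
Qed.

Lemma Rpower_le_max1 (x y : R) : 0 < x -> 0 < y <= 1 -> Rpower x y <= Rmax 1 x.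
Proof.
move=> x_pos [y_pos y_le1]; rewrite /Rmax; case: Rle_dec => [one_le_x | /Rnot_le_lt x_lt1].
- by rewrite -{2}(Rpower_1 x) //; apply: Rle_Rpower.
- rewrite /Rpower -exp_0; apply/Rlt_le/exp_increasing.
  have : ln x < 0 by rewrite -ln_1; apply: ln_increasing.
  by move=> ln_neg; nra.
Qed.

Lemma ln_lt_trunc_log32 (n : nat) : (0 < n)%N ->
  ln (INR n) < INR (trunc_log 32 n).+1 * ln 32.
Proof.
move=> n_pos; rewrite -ln_pow; last lra.
apply: ln_increasing; first by apply: (lt_INR 0); apply/ltP.
rewrite (_ : 32 = INR 32); last by rewrite INR_IZR_INZ.
by rewrite -INR_expn; apply/lt_INR/ltP/trunc_log_ltn.
Qed.

Lemma Gamma_ge_ln (n r : nat) : (2 <= r)%coq_nat -> (r <= n)%coq_nat ->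
  / ln 32 * Rmax 1 (ln (INR n)) <= INR (Gamma n r (r - 1)).
Proof.
move=> /leP two_le_r /leP le_rn.
have := le_INR _ _ (leP (Gamma_gt_trunc_log two_le_r le_rn)).
have := ln_lt_trunc_log32 (leq_trans (ltnW two_le_r) le_rn).
set t := INR (trunc_log 32 n).+1 => ln_lt t_le; apply: Rle_trans t_le.
have t_ge1 : 1 <= t by apply: (le_INR 1); apply/leP.
have ln32 := one_lt_ln32; have inv_pos := inv_ln32_pos.
apply: (Rmult_le_reg_l (ln 32)); first lra.
rewrite -Rmult_assoc Rinv_r; last lra.
rewrite Rmult_1_l /Rmax; case: Rle_dec => _; nra.
Qed.

End TournamentBound.

Import TournamentBound.
Open Scope R_scope.

(* With c = 1 / ln 32: c (ln n)^(1/(r-1)) <= c max(1, ln n) <= Gamma_(r-1)(H(n, r)). *)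
Theorem mainTheorem2 :
  forall r : nat, (2 <= r)%nat ->
  exists c : R, 0 < c /\
    forall n : nat, (r <= n)%nat ->
      c * Rpower (ln (INR n)) (1 / INR (r - 1)) <= INR (Gamma n r (r - 1)).
Proof.
intros r two_le_r.
exists (/ ln 32); split; [exact inv_ln32_pos |].
intros n le_rn.
apply Rle_trans with (/ ln 32 * Rmax 1 (ln (INR n))).
- apply Rmult_le_compat_l; [apply Rlt_le, inv_ln32_pos |].
  apply Rpower_le_max1; [apply ln_INR_pos; lia | apply inv_INR_pred_bounds, two_le_r].
- apply Gamma_ge_ln; assumption.
Qed.
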